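(* There is a constant $C$ such that for every sufficiently large $n$ there exists a $3$-planar graph of girth $5$ on $n$ vertices with at least $2.5n-C$ edges.
   Context: All graphs are finite and simple. A graph is $k$-planar if it admits a drawing in the plane in which every edge is crossed at most $k$ times. The girth of a graph is the length of its shortest cycle. (The paper states the edge count as $2.5n-O(1)$.) *)

From Stdlib Require Import Reals List.
From mathcomp Require Import all_boot.

Set Implicit Arguments.
Unset Strict Implicit.
Unset Printing Implicit Defensive.

Definition simple_graph (n : nat) (e : rel 'I_n) : Prop :=
  symmetric e /\ irreflexive e.

Definition num_edges (n : nat) (e : rel 'I_n) : nat :=
  #|[set p : 'I_n * 'I_n | (p.1 < p.2) && e p.1 p.2]|.

Definition has_cycle_of_length (n : nat) (e : rel 'I_n) (k : nat) : Prop :=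
  exists s : seq 'I_n, [/\ size s = k, (3 <= k)%N, uniq s & cycle e s].

Definition girth_eq (n : nat) (e : rel 'I_n) (g : nat) : Prop :=
  has_cycle_of_length e g /\
  (forall k, (k < g)%N -> ~ has_cycle_of_length e k).

Local Open Scope R_scope.

Definition continuous_on_01 (g : R -> R * R) : Prop :=
  forall t, 0 <= t <= 1 -> forall eps, 0 < eps -> exists d, 0 < d /\
    forall s, 0 <= s <= 1 -> Rabs (s - t) < d ->
      Rabs (fst (g s) - fst (g t)) < eps /\ Rabs (snd (g s) - snd (g t)) < eps.

Definition jordan_arc (g : R -> R * R) : Prop :=
  continuous_on_01 g /\
  (forall s t, 0 <= s <= 1 -> 0 <= t <= 1 -> g s = g t -> s = t).

Definition is_drawing (n : nat) (e : rel 'I_n)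
    (pos : 'I_n -> R * R) (arc : 'I_n -> 'I_n -> R -> R * R) : Prop :=
  injective pos /\
  forall u v : 'I_n, (u < v)%N -> e u v ->
    [/\ jordan_arc (arc u v), arc u v 0 = pos u, arc u v 1 = pos v &
        forall t w, 0 < t < 1 -> arc u v t <> pos w].

Definition crossed_at_most (n : nat) (e : rel 'I_n)
    (arc : 'I_n -> 'I_n -> R -> R * R) (k : nat) (u v : 'I_n) : Prop :=
  exists l : list ('I_n * 'I_n * R), (size l <= k)%N /\
    forall (x y : 'I_n) (s : R), (x < y)%N -> e x y -> (x, y) <> (u, v) ->
      0 < s < 1 -> (exists t, 0 < t < 1 /\ arc x y t = arc u v s) ->
      List.In (x, y, s) l.

Definition k_planar (k n : nat) (e : rel 'I_n) : Prop :=
  exists pos arc, is_drawing e pos arc /\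
    forall u v : 'I_n, (u < v)%N -> e u v -> crossed_at_most e arc k u v.

(* The graph is cut from a doubly periodic straight-line drawing whose unit cell
   has 5 vertices and 13 edges (density 2.6).  Keeping 12 rows of cells gives an
   infinite horizontal strip with 60 vertices and 150 edges per period; on the
   first n vertices, every forward edge of the first n/60 - 2 periods is present,
   whence 2.5 n - O(1) edges.  Girth 5 and 3-planarity are local: each edge spans
   at most three consecutive periods, so every short cycle and every crossing of
   an edge lies among the translates of one period by at most two periods, where
   they are excluded (resp. counted) by exact integer arithmetic. *)

From Stdlib Require Import Reals Lra Lia ZArith.
From Stdlib Require List.
From mathcomp Require Import all_boot ssrZ zify.

Set Implicit Arguments.
Unset Strict Implicit.
Unset Printing Implicit Defensive.

Lemma iota_allP (p : pred nat) n : all p (iota 0 n) -> forall a, a < n -> p a.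
Proof. by move/allP=> p_all a lt_an; apply: p_all; rewrite mem_iota. Qed.

(* [tabulate x0 n f] agrees with [f] below [n] (tabulateE), but when it is passed
   as an argument to a certificate the kernel evaluates the table only once. *)
Definition tabulate (T : Type) (x0 : T) (n : nat) (f : nat -> T) : nat -> T :=
  let table := mkseq f n in fun a => nth x0 table a.

Lemma tabulateE (T : Type) (x0 : T) n f a : a < n -> tabulate x0 n f a = f a.
Proof. by move=> lt_an; rewrite /tabulate nth_mkseq. Qed.

Lemma In_map_mem (T : eqType) (U : Type) (f : T -> U) (x : T) (s : seq T) :
  x \in s -> List.In (f x) (map f s).
Proof. by elim: s => //= y s IH; rewrite inE => /orP [/eqP ->|/IH]; [left | right]. Qed.

Lemma has_cycle_of_length_lift n (r : rel nat) (s : seq nat) :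
  all (gtn n) s -> uniq s -> (3 <= size s)%N -> cycle r s ->
  has_cycle_of_length (fun u v : 'I_n => r u v) (size s).
Proof.
move=> /all_filterP s_lt_n s_uniq s_ge3 s_cycle.
have val_s : map val (pmap insub s : seq 'I_n) = s.
  by rewrite (pmap_filter (insubK _)) (eq_filter (isSome_insub _)) s_lt_n.
exists (pmap insub s); split=> //.
- by rewrite -{2}val_s size_map.
- exact: pmap_sub_uniq.
- by move: s_cycle; rewrite -{1}val_s cycle_map.
Qed.

Local Open Scope R_scope.

Definition segment (A B : R * R) (t : R) : R * R :=
  ((1 - t) * fst A + t * fst B, (1 - t) * snd A + t * snd B).

Lemma segment0 A B : segment A B 0 = A.
Proof. by case: A => a1 a2; rewrite /segment /=; f_equal; ring. Qed.

Lemma segment1 A B : segment A B 1 = B.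
Proof. by case: B => b1 b2; rewrite /segment /=; f_equal; ring. Qed.

Lemma segment_continuous A B : continuous_on_01 (segment A B).
Proof.
move=> t _ eps eps_gt0.
have dx_ge0 := Rabs_pos (fst B - fst A); have dy_ge0 := Rabs_pos (snd B - snd A).
set K := Rabs (fst B - fst A) + Rabs (snd B - snd A) + 1.
have K_gt0 : 0 < K by rewrite /K; lra.
exists (eps / K); split; first exact: Rdiv_lt_0_compat.
move=> s _ st_small.
have st_K : Rabs (s - t) * K < eps.
  have -> : eps = eps / K * K by field; lra.
  exact: Rmult_lt_compat_r.
have close (a b : R) : Rabs (b - a) < K ->
    Rabs ((1 - s) * a + s * b - ((1 - t) * a + t * b)) < eps.
  move=> ab_K.
  have -> : (1 - s) * a + s * b - ((1 - t) * a + t * b) = (s - t) * (b - a) by ring.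
  rewrite Rabs_mult; have := Rabs_pos (s - t); nra.
by split; apply: close; rewrite /K; lra.
Qed.

Lemma segment_jordan_arc A B : A <> B -> jordan_arc (segment A B).
Proof.
move=> neqAB; split; first exact: segment_continuous.
move=> s t _ _ [e1 e2]; apply: Rminus_diag_uniq.
case: (Req_dec (s - t) 0) => // st_neq0; case: neqAB.
have dx0 : fst B - fst A = 0 by apply: (Rmult_eq_reg_l (s - t)); nra.
have dy0 : snd B - snd A = 0 by apply: (Rmult_eq_reg_l (s - t)); nra.
by case: A B dx0 dy0 {e1 e2} => a1 a2 [b1 b2] /= dx0 dy0; f_equal; lra.
Qed.

Lemma segment_fst_range (L M : R) A B t : 0 < t < 1 ->
  L <= fst A < M -> L <= fst B < M -> L <= fst (segment A B t) < M.
Proof. move=> t01 [A1 A2] [B1 B2] /=; split; nra. Qed.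

(* Integer points are placed relative to a horizontal offset [x0], so that the
   exact tests below only ever see the small coordinates of nearby periods. *)
Definition zpt (x0 : R) (p : Z * Z) : R * R := (x0 + IZR p.1, IZR p.2).

Definition cross (u v : Z * Z) : Z := (u.1 * v.2 - u.2 * v.1)%Z.
Definition dot (u v : Z * Z) : Z := (u.1 * v.1 + u.2 * v.2)%Z.
Definition zsub (p q : Z * Z) : Z * Z := (p.1 - q.1, p.2 - q.2)%Z.

Definition ratio_in01 (num den : Z) : bool :=
  if (0 <? den)%Z then (0 <? num)%Z && (num <? den)%Z else (den <? num)%Z && (num <? 0)%Z.

Lemma ratio_in01_sound (num den : Z) (s : R) :
  0 < s < 1 -> IZR num = s * IZR den -> (den <> 0)%Z -> ratio_in01 num den.
Proof.
move=> s01 num_eq den_neq0; rewrite /ratio_in01.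
case: (Z.ltb_spec 0 den) => den_sign.
- have /IZR_lt den_pos := den_sign.
  by apply/andP; split; apply/Z.ltb_spec0/lt_IZR; rewrite num_eq; nra.
- have /IZR_lt den_neg : (den < 0)%Z by lia.
  by apply/andP; split; apply/Z.ltb_spec0/lt_IZR; rewrite num_eq; nra.
Qed.

Variant meet := NoMeet | MeetAt of Z & Z | Overlap.

(* By Cramer's rule, [a + s (b - a) = c + t (d - c)] forces [s = num / den] and
   [t = numt / den] when [den <> 0].  Parallel segments are reported as
   [Overlap] unless they are evidently disjoint. *)
Definition segment_meet (a b c d : Z * Z) : meet :=
  let den := cross (zsub b a) (zsub d c) in
  let num := cross (zsub c a) (zsub d c) in
  let numt := cross (zsub c a) (zsub b a) in
  if (den != 0)%Z then
    (if ratio_in01 num den && ratio_in01 numt den then MeetAt num den else NoMeet)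
  else if (num != 0)%Z || (numt != 0)%Z then NoMeet
  else
    let nn := dot (zsub b a) (zsub b a) in
    let pc := dot (zsub c a) (zsub b a) in
    let pd := dot (zsub d a) (zsub b a) in
    if (0 <? nn)%Z && (((pc <=? 0)%Z && (pd <=? 0)%Z) || ((nn <=? pc)%Z && (nn <=? pd)%Z))
    then NoMeet else Overlap.

Lemma segment_meet_sound x0 (a b c d : Z * Z) (s t : R) :
  0 < s < 1 -> 0 < t < 1 ->
  segment (zpt x0 a) (zpt x0 b) s = segment (zpt x0 c) (zpt x0 d) t ->
  match segment_meet a b c d with
  | MeetAt num den => s = IZR num / IZR den
  | NoMeet => False
  | Overlap => True
  end.
Proof.
case: a b c d => [ax ay] [bx by'] [cx cy] [dx dy] s01 t01 [eqx eqy].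
set ex := s * (IZR bx - IZR ax) - t * (IZR dx - IZR cx) - (IZR cx - IZR ax).
set ey := s * (IZR by' - IZR ay) - t * (IZR dy - IZR cy) - (IZR cy - IZR ay).
have ex0 : ex = 0 by rewrite /ex; nra.
have ey0 : ey = 0 by rewrite /ey; nra.
rewrite /segment_meet /cross /dot /zsub /=.
set den := ((bx - ax) * (dy - cy) - (by' - ay) * (dx - cx))%Z.
set num := ((cx - ax) * (dy - cy) - (cy - ay) * (dx - cx))%Z.
set numt := ((cx - ax) * (by' - ay) - (cy - ay) * (bx - ax))%Z.
have num_eq : IZR num = s * IZR den + (ey * (IZR dx - IZR cx) - ex * (IZR dy - IZR cy)).
  by rewrite /ex /ey /num /den !minus_IZR !mult_IZR !minus_IZR; ring.
have numt_eq : IZR numt = t * IZR den + (ey * (IZR bx - IZR ax) - ex * (IZR by' - IZR ay)).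
  by rewrite /ex /ey /numt /den !minus_IZR !mult_IZR !minus_IZR; ring.
rewrite ex0 ey0 in num_eq numt_eq.
have {}num_eq : IZR num = s * IZR den by lra.
have {}numt_eq : IZR numt = t * IZR den by lra.
case: (den =P 0%Z) => [den0 | den_neq0] /=; last first.
  rewrite (ratio_in01_sound s01 num_eq den_neq0) (ratio_in01_sound t01 numt_eq den_neq0) /=.
  by rewrite num_eq; field; apply: not_0_IZR.
have -> : num = 0%Z by apply: eq_IZR; rewrite num_eq den0; ring.
have -> : numt = 0%Z by apply: eq_IZR; rewrite numt_eq den0; ring.
set nn := ((bx - ax) * (bx - ax) + (by' - ay) * (by' - ay))%Z.
set pc := ((cx - ax) * (bx - ax) + (cy - ay) * (by' - ay))%Z.
set pd := ((dx - ax) * (bx - ax) + (dy - ay) * (by' - ay))%Z.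
have proj_eq : s * IZR nn =
    (1 - t) * IZR pc + t * IZR pd + (ex * (IZR bx - IZR ax) + ey * (IZR by' - IZR ay)).
  by rewrite /ex /ey /nn /pc /pd !plus_IZR !mult_IZR !minus_IZR; ring.
rewrite ex0 ey0 in proj_eq.
case: ifP => // /andP [/Z.ltb_spec0/IZR_lt nn_pos /orP
  [/andP [/Z.leb_spec0/IZR_le pc_le /Z.leb_spec0/IZR_le pd_le] |
   /andP [/Z.leb_spec0/IZR_le pc_ge /Z.leb_spec0/IZR_le pd_ge]]]; nra.
Qed.

Definition off_segment (a b w : Z * Z) : bool :=
  let nn := dot (zsub b a) (zsub b a) in
  [&& (0 <? nn)%Z & (cross (zsub w a) (zsub b a) != 0)%Z || (dot (zsub w a) (zsub b a) <=? 0)%Z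
                    || (nn <=? dot (zsub w a) (zsub b a))%Z].

Lemma off_segment_sound x0 (a b w : Z * Z) (t : R) :
  off_segment a b w -> 0 < t < 1 -> segment (zpt x0 a) (zpt x0 b) t <> zpt x0 w.
Proof.
case: a b w => [ax ay] [bx by'] [wx wy] + t01 [eqx eqy].
have dx : IZR wx - IZR ax = t * (IZR bx - IZR ax) by lra.
have dy : IZR wy - IZR ay = t * (IZR by' - IZR ay) by lra.
rewrite /off_segment /cross /dot /zsub /=.
set nn := ((bx - ax) * (bx - ax) + (by' - ay) * (by' - ay))%Z.
have -> : ((wx - ax) * (by' - ay) - (wy - ay) * (bx - ax))%Z = 0%Z.
  by apply: eq_IZR; rewrite !minus_IZR !mult_IZR !minus_IZR dx dy; ring.
have proj_eq : IZR ((wx - ax) * (bx - ax) + (wy - ay) * (by' - ay)) = t * IZR nn.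
  by rewrite /nn !plus_IZR !mult_IZR !minus_IZR dx dy; ring.
move=> /andP [/Z.ltb_spec0/IZR_lt nn_pos
  /orP [/orP [//|/Z.leb_spec0/IZR_le] | /Z.leb_spec0/IZR_le]]; rewrite proj_eq; nra.
Qed.

Local Close Scope R_scope.

Section PeriodicStrip.

(* Vertex [v] of the strip is the copy in block [v %/ P] of the pattern vertex
   [v %% P]; a pair [(b, d)] in [fwd a] joins [a] to [b] in the block [d] steps
   to the right.  Pattern vertex [a] is drawn at [(X a, Y a)] and block [q] is
   translated by [1000 q] horizontally. *)
Variables (P : nat) (fwd : nat -> seq (nat * nat)) (X Y : nat -> Z).

Hypothesis P_gt0 : 0 < P.
Hypothesis fwd_wf : forall a b d, a < P -> (b, d) \in fwd a ->
  [/\ b < P, d <= 2 & (d = 0 -> a < b)].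
Hypothesis fwd_uniq : forall a, a < P -> uniq (fwd a).

Let ltn_modP v : v %% P < P. Proof. exact: ltn_pmod. Qed.

Definition fwd_adj (u v : nat) : bool :=
  (u %/ P <= v %/ P) && ((v %% P, v %/ P - u %/ P) \in fwd (u %% P)).

Definition strip_adj (u v : nat) : bool := fwd_adj u v || fwd_adj v u.

Definition strip_graph n : rel 'I_n := fun u v => strip_adj u v.
Arguments strip_graph n : clear implicits.

Lemma fwd_adj_inv u v : fwd_adj u v ->
  [/\ (v %% P, v %/ P - u %/ P) \in fwd (u %% P), u %/ P <= v %/ P,
      v %/ P - u %/ P <= 2 & u < v].
Proof.
move=> /andP [le_uv fwd_uv]; have [_ d_le2 d0_lt] := fwd_wf (ltn_modP u) fwd_uv.
split=> //; case: (ltnP (u %/ P) (v %/ P)) => [lt_q | le_q].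
- by rewrite ltnNge; apply: contraL lt_q => le_vu; rewrite -leqNgt leq_div2r.
- have eq_q : v %/ P = u %/ P by apply/eqP; rewrite eqn_leq le_q le_uv.
  by rewrite (divn_eq u P) (divn_eq v P) eq_q ltn_add2l d0_lt // eq_q subnn.
Qed.

Lemma strip_graph_simple n : simple_graph (strip_graph n).
Proof.
split=> [u v | u]; first by rewrite /strip_graph /strip_adj orbC.
by rewrite /strip_graph /strip_adj orbb; apply/negP => /fwd_adj_inv [_ _ _]; rewrite ltnn.
Qed.

Lemma strip_graph_fwd n (u v : 'I_n) : u < v -> strip_graph n u v -> fwd_adj u v.
Proof. by move=> lt_uv /orP [// | /fwd_adj_inv [_ _ _ lt_vu]]; move: lt_uv lt_vu; lia. Qed.

Lemma sum_fwd_periodic K :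
  \sum_(0 <= x < K * P) size (fwd (x %% P)) = K * \sum_(0 <= a < P) size (fwd a).
Proof.
elim: K => [|K IH]; first by rewrite !mul0n big_geq.
rewrite mulSnr (big_cat_nat _ (n := K * P)) ?leq_addr //= IH mulSnr; congr (_ + _).
rewrite -{1}[K * P]add0n big_addn addKn.
by apply: eq_big_nat => a /andP [_ lt_aP]; rewrite addnC modnMDl modn_small.
Qed.

Lemma card_fwd_adj n x : (x %/ P + 3) * P <= n ->
  size (fwd (x %% P)) <= #|[set y : 'I_n | fwd_adj x y]|.
Proof.
move=> x_low.
pose target (p : nat * nat) := (x %/ P + p.2) * P + p.1.
have target_lt p : p \in fwd (x %% P) -> target p < n.
  by case: p => b d /(fwd_wf (ltn_modP x)) [lt_b le_d _]; rewrite /target /=; nia.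
have target_coord p : p \in fwd (x %% P) -> target p %/ P = x %/ P + p.2 /\ target p %% P = p.1.
  case: p => b d /(fwd_wf (ltn_modP x)) [lt_b _ _].
  by rewrite /target /= divnMDl // modnMDl (divn_small lt_b) (modn_small lt_b) addn0.
have n_gt0 : 0 < n by nia.
pose vtx p : 'I_n := insubd (Ordinal n_gt0) (target p).
have vtx_val p : p \in fwd (x %% P) -> val (vtx p) = target p.
  by move=> p_fwd; rewrite val_insubd target_lt.
have vtx_uniq : uniq (map vtx (fwd (x %% P))).
  rewrite map_inj_in_uniq ?fwd_uniq // => p p' p_fwd p'_fwd /(congr1 val).
  rewrite !vtx_val // => eq_t.
  have [q_p r_p] := target_coord p p_fwd; have [q_p' r_p'] := target_coord p' p'_fwd.
  move: q_p' r_p'; rewrite -eq_t q_p r_p => /addnI.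
  by case: p p' {p_fwd p'_fwd eq_t q_p r_p} => [b d] [b' d'] /= -> ->.
rewrite -(size_map vtx) -(card_uniqP vtx_uniq); apply: subset_leq_card.
apply/subsetP => _ /mapP [p p_fwd ->]; rewrite inE /fwd_adj vtx_val //.
have [-> ->] := target_coord p p_fwd.
by rewrite leq_addr addKn -surjective_pairing.
Qed.

Lemma num_edges_strip n :
  (n %/ P - 2) * \sum_(0 <= a < P) size (fwd a) <= num_edges (strip_graph n).
Proof.
set K := n %/ P - 2.
have fwd_le : #|[set p : 'I_n * 'I_n | fwd_adj p.1 p.2]| <= num_edges (strip_graph n).
  apply: subset_leq_card; apply/subsetP => p; rewrite !inE => p_fwd.
  by have [_ _ _ ->] := fwd_adj_inv p_fwd; rewrite /strip_graph /strip_adj p_fwd.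
have fwd_card : #|[set p : 'I_n * 'I_n | fwd_adj p.1 p.2]| =
                \sum_(x : 'I_n) #|[set y : 'I_n | fwd_adj x y]|.
  rewrite -sum1_card (eq_bigl (fun p : 'I_n * 'I_n => predT p.1 && fwd_adj p.1 p.2)) => [|p];
    last by rewrite inE.
  rewrite -(pair_big_dep predT (fun x y : 'I_n => fwd_adj x y) (fun _ _ => 1)).
  by apply: eq_bigr => x _; rewrite -sum1_card; apply: eq_bigl => y; rewrite inE.
have KP_le : K * P <= n by apply: leq_trans (leq_divM n P); rewrite leq_mul2r leq_subr orbT.
apply: leq_trans fwd_le; rewrite fwd_card -sum_fwd_periodic big_mkord.
rewrite (big_ord_widen n (fun x => size (fwd (x %% P))) KP_le).
rewrite [X in _ <= X](bigID (fun x : 'I_n => x < K * P)) /=; apply: leq_trans (leq_addr _ _).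
apply: leq_sum => x; rewrite -ltn_divLR // => x_lt; apply: card_fwd_adj.
apply: leq_trans (leq_divM n P); rewrite leq_mul2r; apply/orP; right.
by move: x_lt; rewrite /K; move: (x %/ P) (n %/ P); lia.
Qed.

Definition zblock (v : nat) : Z := Z.of_nat (v %/ P).

Definition rel_coord (u v : nat) : Z * nat := ((zblock v - zblock u)%Z, v %% P).

Definition shift (o : Z) (p : Z * nat) : Z * nat := ((o + p.1)%Z, p.2).

Lemma rel_coord_inj u : injective (rel_coord u).
Proof.
move=> v w [eq_q eq_r]; rewrite (divn_eq v P) (divn_eq w P) eq_r.
by congr (_ * _ + _); move: eq_q; rewrite /zblock; lia.
Qed.

Lemma rel_coord_self u : rel_coord u u = (0%Z, u %% P).
Proof. by rewrite /rel_coord Z.sub_diag. Qed.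

Lemma rel_coord_trans u v w : shift (rel_coord u v).1 (rel_coord v w) = rel_coord u w.
Proof. by rewrite /shift /rel_coord /=; congr (_, _); lia. Qed.

Lemma rel_coord_sym u v : rel_coord v u = ((- (rel_coord u v).1)%Z, u %% P).
Proof. by rewrite /rel_coord /=; congr (_, _); lia. Qed.

Definition neighbours (a : nat) : seq (Z * nat) :=
  [seq (Z.of_nat p.2, p.1) | p <- fwd a] ++
  [seq ((- Z.of_nat p.2)%Z, c) | c <- iota 0 P, p <- [seq p <- fwd c | p.1 == a]].

Lemma adj_neighbours u v : strip_adj u v -> rel_coord u v \in neighbours (u %% P).
Proof.
rewrite mem_cat => /orP [/andP [le_uv fwd_uv] | /andP [le_vu fwd_vu]]; apply/orP.
- left; apply/mapP; exists (v %% P, v %/ P - u %/ P) => //.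
  by rewrite /rel_coord /zblock /=; congr (_, _); lia.
- right; apply/allpairsPdep; exists (v %% P), (u %% P, u %/ P - v %/ P).
  rewrite mem_iota ltn_modP mem_filter eqxx fwd_vu; split=> //.
  by rewrite /rel_coord /zblock /=; congr (_, _); lia.
Qed.

Definition neighbour_table : seq (seq (Z * nat)) := [seq neighbours a | a <- iota 0 P].

Lemma adj_neighbour_table u v :
  strip_adj u v -> rel_coord u v \in nth [::] neighbour_table (u %% P).
Proof. by move/adj_neighbours; rewrite (nth_map 0) ?size_iota // nth_iota. Qed.

(* The [let]s in the certificates make the kernel evaluate each shared list once. *)
Definition triangle_free_cert : bool :=
  let nb := neighbour_table in
  all (fun a => all (fun p1 => all (fun p2 =>
      let q2 := shift p1.1 p2 in
      (((- q2.1)%Z, a) \in nth [::] nb q2.2) ==> ~~ uniq [:: (0%Z, a); p1; q2])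
    (nth [::] nb p1.2)) (nth [::] nb a)) (iota 0 P).

Definition quadrangle_free_cert : bool :=
  let nb := neighbour_table in
  all (fun a => all (fun p1 => all (fun p2 => all (fun p3 =>
      let q2 := shift p1.1 p2 in
      let q3 := shift q2.1 p3 in
      (((- q3.1)%Z, a) \in nth [::] nb q3.2) ==> ~~ uniq [:: (0%Z, a); p1; q2; q3])
    (nth [::] nb p2.2)) (nth [::] nb p1.2)) (nth [::] nb a)) (iota 0 P).

Hypothesis triangle_free : triangle_free_cert.
Hypothesis quadrangle_free : quadrangle_free_cert.

Lemma strip_no_triangle v0 v1 v2 :
  strip_adj v0 v1 -> strip_adj v1 v2 -> strip_adj v2 v0 -> ~~ uniq [:: v0; v1; v2].
Proof.
move=> e01 e12 e20; rewrite -(map_inj_uniq (@rel_coord_inj v0)).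
move/allP: triangle_free => /(_ (v0 %% P)); rewrite mem_iota ltn_modP => /(_ isT).
move=> /allP /(_ _ (adj_neighbour_table e01)) /allP /(_ _ (adj_neighbour_table e12)).
by cbv zeta; rewrite !rel_coord_trans -rel_coord_sym (adj_neighbour_table e20) -(rel_coord_self v0).
Qed.

Lemma strip_no_quadrangle v0 v1 v2 v3 : strip_adj v0 v1 -> strip_adj v1 v2 ->
  strip_adj v2 v3 -> strip_adj v3 v0 -> ~~ uniq [:: v0; v1; v2; v3].
Proof.
move=> e01 e12 e23 e30; rewrite -(map_inj_uniq (@rel_coord_inj v0)).
move/allP: quadrangle_free => /(_ (v0 %% P)); rewrite mem_iota ltn_modP => /(_ isT).
move=> /allP /(_ _ (adj_neighbour_table e01)) /allP /(_ _ (adj_neighbour_table e12)).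
move=> /allP /(_ _ (adj_neighbour_table e23)).
by cbv zeta; rewrite !rel_coord_trans -rel_coord_sym (adj_neighbour_table e30) -(rel_coord_self v0).
Qed.

Lemma strip_graph_no_short_cycle n k : k < 5 -> ~ has_cycle_of_length (strip_graph n) k.
Proof.
move=> k_lt5 [s [size_s k_ge3 s_uniq s_cycle]]; subst k.
have {s_uniq} : uniq (map val s) by rewrite (map_inj_uniq val_inj).
case: s k_ge3 k_lt5 s_cycle => [|v0 [|v1 [|v2 [|v3 [|v4 s]]]]] //= _ _.
- move=> /and4P [e01 e12 e20 _] uniq3; exact: (negP (strip_no_triangle e01 e12 e20) uniq3).
- move=> /and5P [e01 e12 e23 e30 _] uniq4.
  exact: (negP (strip_no_quadrangle e01 e12 e23 e30) uniq4).
Qed.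

Hypothesis X_range : forall a, a < P -> (0 <= X a < 1000)%Z.
Hypothesis XY_inj : forall a c, a < P -> c < P -> X a = X c -> Y a = Y c -> a = c.

Definition rel_pt (r : Z) (a : nat) : Z * Z := (r * 1000 + X a, Y a)%Z.

Definition vertex_pos (v : nat) : R * R := zpt 0 (rel_pt (zblock v) (v %% P)).

Lemma fwd_adj_block u v : fwd_adj u v -> Z.of_nat (v %/ P - u %/ P) = (zblock v - zblock u)%Z.
Proof. by case/fwd_adj_inv => _ + _ _; rewrite /zblock; move: (u %/ P) (v %/ P); lia. Qed.

Local Open Scope R_scope.

Lemma vertex_pos_rel u v :
  vertex_pos v = zpt (IZR (1000 * zblock u)) (rel_pt (zblock v - zblock u) (v %% P)).
Proof.
rewrite /vertex_pos /zpt /rel_pt; cbn [fst snd]; congr (_, _).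
by rewrite Rplus_0_l -plus_IZR; congr IZR; lia.
Qed.

Lemma vertex_pos_inj : injective vertex_pos.
Proof.
move=> v w; rewrite /vertex_pos /zpt /rel_pt; cbn [fst snd].
move=> -[/Rplus_eq_reg_l/eq_IZR eq_x /eq_IZR eq_y].
have := X_range (ltn_modP v); have := X_range (ltn_modP w) => Xw Xv.
have eq_q : zblock v = zblock w by lia.
have eq_X : X (v %% P) = X (w %% P) by lia.
apply: (@rel_coord_inj 0); rewrite /rel_coord eq_q.
by rewrite (XY_inj (ltn_modP v) (ltn_modP w) eq_X eq_y).
Qed.

Lemma fwd_edge_rel u x y : fwd_adj x y ->
  segment (vertex_pos x) (vertex_pos y) =
  segment (zpt (IZR (1000 * zblock u)) (rel_pt (zblock x - zblock u) (x %% P)))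
          (zpt (IZR (1000 * zblock u))
               (rel_pt (zblock x - zblock u + Z.of_nat (y %/ P - x %/ P)) (y %% P))).
Proof.
move=> /fwd_adj_block xy_block; rewrite (vertex_pos_rel u x) (vertex_pos_rel u y) xy_block.
by congr (segment _ (zpt _ (rel_pt _ _))); lia.
Qed.

Definition in_window (q : Z) (x : R) : Prop := IZR (1000 * q) <= x < IZR (1000 * q) + 3000.

Lemma windows_near q1 q2 x : in_window q1 x -> in_window q2 x -> (-2 <= q2 - q1 <= 2)%Z.
Proof.
move=> [lo1 hi1] [lo2 hi2].
have /lt_IZR : IZR (1000 * q2) < IZR (1000 * q1 + 3000) by rewrite plus_IZR; lra.
have /lt_IZR : IZR (1000 * q1) < IZR (1000 * q2 + 3000) by rewrite plus_IZR; lra.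
lia.
Qed.

Lemma vertex_x_range v :
  IZR (1000 * zblock v) <= fst (vertex_pos v) < IZR (1000 * zblock v) + 1000.
Proof.
rewrite /vertex_pos /zpt /rel_pt; cbn [fst]; rewrite Rplus_0_l.
have [/IZR_le X_ge0 /IZR_lt X_lt] := X_range (ltn_modP v).
by rewrite plus_IZR Z.mul_comm; lra.
Qed.

Lemma edge_in_window u v t : fwd_adj u v -> 0 < t < 1 ->
  in_window (zblock u) (fst (segment (vertex_pos u) (vertex_pos v) t)).
Proof.
move=> uv t01.
have [lo_v hi_v] := vertex_x_range v; have [lo_u hi_u] := vertex_x_range u.
have [_ _ d_le2 _] := fwd_adj_inv uv; have blk := fwd_adj_block uv.
move: (v %/ P - u %/ P)%N d_le2 blk => d d_le2 blk.
have /IZR_le le_q : (1000 * zblock u <= 1000 * zblock v)%Z by lia.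
have /IZR_le le_q' : (1000 * zblock v <= 1000 * zblock u + 2000)%Z by lia.
rewrite plus_IZR in le_q'.
by apply: segment_fst_range; split; lra.
Qed.

Definition near_blocks : seq Z := [:: -2; -1; 0; 1; 2]%Z.

Lemma mem_near_blocks r : (-2 <= r <= 2)%Z -> r \in near_blocks.
Proof.
move=> r_near; have : (r = -2 \/ r = -1 \/ r = 0 \/ r = 1 \/ r = 2)%Z by lia.
by case=> [->|[->|[->|[->|->]]]].
Qed.

Definition edge_type (x y : nat) : nat * nat * nat := (x %% P, y %% P, (y %/ P - x %/ P)%N).

Definition pattern_edges : seq (nat * nat * nat) :=
  [seq (a, p.1, p.2) | a <- iota 0 P, p <- fwd a].

Lemma edge_type_pattern x y : fwd_adj x y -> edge_type x y \in pattern_edges.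
Proof.
case/fwd_adj_inv=> fwd_xy _ _ _; apply/allpairsPdep.
by exists (x %% P), (y %% P, (y %/ P - x %/ P)%N); rewrite mem_iota ltn_modP.
Qed.

Definition edges_avoid_vertices_cert : bool :=
  all (fun t => let: (a, b, d) := t in
    all (fun r => all (fun c => off_segment (rel_pt 0 a) (rel_pt (Z.of_nat d) b) (rel_pt r c))
      (iota 0 P)) near_blocks) pattern_edges.

Hypothesis edges_avoid_vertices : edges_avoid_vertices_cert.

Lemma edge_avoids_vertex u v w t : fwd_adj u v -> 0 < t < 1 ->
  segment (vertex_pos u) (vertex_pos v) t <> vertex_pos w.
Proof.
move=> uv t01 hit.
have r_near : (-2 <= zblock w - zblock u <= 2)%Z.
  apply: windows_near (edge_in_window uv t01) _; rewrite hit.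
  by have := vertex_x_range w; rewrite /in_window; lra.
move/allP: edges_avoid_vertices => /(_ _ (edge_type_pattern uv)).
rewrite /edge_type; cbv beta iota.
move=> /allP /(_ _ (mem_near_blocks r_near)) /allP /(_ (w %% P)); rewrite mem_iota ltn_modP.
move=> /(_ isT) /(@off_segment_sound (IZR (1000 * zblock u)) _ _ _ t) /(_ t01); apply.
by rewrite -(vertex_pos_rel u w) -hit (fwd_edge_rel u uv) Z.sub_diag Z.add_0_l.
Qed.

Definition near_edges : seq (Z * (nat * nat * nat)) :=
  [seq (r, t) | r <- near_blocks, t <- pattern_edges].

Definition rel_edge (u x y : nat) : Z * (nat * nat * nat) :=
  ((zblock x - zblock u)%Z, edge_type x y).

Definition edge_meet (t : nat * nat * nat) (f : Z * (nat * nat * nat)) : meet :=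
  let: (a, b, d) := t in
  let: (r, (c, e, d')) := f in
  segment_meet (rel_pt 0 a) (rel_pt (Z.of_nat d) b) (rel_pt r c) (rel_pt (r + Z.of_nat d') e).

Definition is_meet (m : meet) : bool := if m is MeetAt _ _ then true else false.
Definition is_overlap (m : meet) : bool := if m is Overlap then true else false.
Definition meet_ratio (m : meet) : R := if m is MeetAt num den then IZR num / IZR den else 0.

Definition crossing_edges (t : nat * nat * nat) : seq (Z * (nat * nat * nat)) :=
  [seq f <- near_edges | (f != (0%Z, t)) && is_meet (edge_meet t f)].

Definition meets_with (E : seq (Z * (nat * nat * nat))) (t : nat * nat * nat) : seq meet :=
  [seq edge_meet t f | f <- E & f != (0%Z, t)].

Lemma size_crossing_edges t : size (crossing_edges t) = count is_meet (meets_with near_edges t).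
Proof. by rewrite size_filter count_map count_filter; apply: eq_count => f; rewrite /= andbC. Qed.

Definition crossing_cert : bool :=
  let E := near_edges in
  all (fun t => let ms := meets_with E t in (count is_meet ms <= 3)%N && ~~ has is_overlap ms)
    pattern_edges.

Hypothesis crossing_bound : crossing_cert.

Lemma mem_crossing_edges u v x y s t : fwd_adj u v -> fwd_adj x y -> (x, y) <> (u, v) ->
  0 < s < 1 -> 0 < t < 1 ->
  segment (vertex_pos x) (vertex_pos y) t = segment (vertex_pos u) (vertex_pos v) s ->
  rel_edge u x y \in crossing_edges (edge_type u v) /\
  s = meet_ratio (edge_meet (edge_type u v) (rel_edge u x y)).
Proof.
move=> uv xy neq s01 t01 hit.
have r_near : (-2 <= zblock x - zblock u <= 2)%Z.
  apply: windows_near (edge_in_window uv s01) _; rewrite -hit; exact: edge_in_window.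
have near : rel_edge u x y \in near_edges.
  apply/allpairsPdep; exists (zblock x - zblock u)%Z, (edge_type x y).
  by rewrite mem_near_blocks ?edge_type_pattern.
have not_self : rel_edge u x y != (0%Z, edge_type u v).
  apply/eqP => -[eq_q eq_x eq_y eq_d]; apply: neq.
  have eq_xu : x = u by apply: (@rel_coord_inj u); rewrite /rel_coord Z.sub_diag eq_q eq_x.
  suff eq_yv : y = v by rewrite eq_xu eq_yv.
  apply: (@rel_coord_inj u); rewrite /rel_coord eq_y; congr (_, _).
  by rewrite -(fwd_adj_block uv) -eq_d (fwd_adj_block xy) eq_xu.
have no_overlap : ~~ is_overlap (edge_meet (edge_type u v) (rel_edge u x y)).
  move/allP: crossing_bound => /(_ _ (edge_type_pattern uv)) /andP [_].
  by rewrite has_map => /hasPn; apply; rewrite mem_filter not_self.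
have := hit; rewrite (fwd_edge_rel u uv) (fwd_edge_rel u xy) Z.sub_diag Z.add_0_l.
move=> /esym /(segment_meet_sound s01 t01).
rewrite /crossing_edges mem_filter near not_self.
move: no_overlap; rewrite /edge_meet /rel_edge /edge_type /=.
by case: segment_meet => [|num den|] // _ ->.
Qed.

Definition vertex_at n (x0 : 'I_n) (q : Z) (c : nat) : 'I_n :=
  insubd x0 (Z.to_nat q * P + c)%N.

Lemma vertex_at_coord n (x0 x : 'I_n) : vertex_at x0 (zblock x) (x %% P) = x.
Proof. by apply: val_inj; rewrite /vertex_at val_insubd Nat2Z.id -divn_eq ltn_ord. Qed.

Definition crossing_entry n (u v : 'I_n) (f : Z * (nat * nat * nat)) : 'I_n * 'I_n * R :=
  let: (r, (c, e, d)) := f in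
  (vertex_at u (zblock u + r) c, vertex_at u (zblock u + r + Z.of_nat d) e,
   meet_ratio (edge_meet (edge_type u v) f)).

Definition strip_arc n (u v : 'I_n) : R -> R * R := segment (vertex_pos u) (vertex_pos v).

Lemma strip_edge_crossings n (u v : 'I_n) : (u < v)%N -> strip_graph n u v ->
  crossed_at_most (strip_graph n) (@strip_arc n) 3 u v.
Proof.
move=> lt_uv /(strip_graph_fwd lt_uv) uv.
move/allP: crossing_bound => /(_ _ (edge_type_pattern uv)) /andP [few _].
exists (map (crossing_entry u v) (crossing_edges (edge_type u v))).
split; first by rewrite size_map size_crossing_edges.
move=> x y s lt_xy /(strip_graph_fwd lt_xy) xy neq s01 [t [t01 hit]].
have neq_val : (val x, val y) <> (val u, val v).
  by move=> -[/val_inj eq_x /val_inj eq_y]; apply: neq; rewrite eq_x eq_y.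
have [mem_f ->] := mem_crossing_edges uv xy neq_val s01 t01 hit.
have -> : (x, y, meet_ratio (edge_meet (edge_type u v) (rel_edge u x y))) =
          crossing_entry u v (rel_edge u x y).
  rewrite /crossing_entry {2 3}/rel_edge /edge_type; cbv beta iota.
  have -> : (zblock u + (zblock x - zblock u))%Z = zblock x by ring.
  have -> : (zblock x + Z.of_nat (y %/ P - x %/ P))%Z = zblock y.
    by rewrite (fwd_adj_block xy); ring.
  by rewrite !vertex_at_coord.
exact: In_map_mem.
Qed.

Lemma strip_graph_3planar n : k_planar 3 (strip_graph n).
Proof.
exists (fun v : 'I_n => vertex_pos v), (@strip_arc n).
split=> [|u v lt_uv uv]; last exact: strip_edge_crossings.
split=> [u w /vertex_pos_inj /val_inj // | u v lt_uv /(strip_graph_fwd lt_uv) uv].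
have neq_pos : vertex_pos u <> vertex_pos v.
  by move/vertex_pos_inj => eq_uv; rewrite eq_uv ltnn in lt_uv.
split; [exact: segment_jordan_arc | exact: segment0 | exact: segment1 |].
by move=> t w t01; apply: edge_avoids_vertex.
Qed.

End PeriodicStrip.
Arguments strip_graph : clear implicits.

(* The cells form a square lattice of side 1000 whose columns are the blocks of
   the strip; a triple [(j', dr, dc)] in the [j]-th list of [cell_edges] joins
   vertex [j] of a cell to vertex [j'] of the cell [dr] rows up and [dc] columns
   right.  The strip keeps 12 rows: pattern vertex [5 k + j] is vertex [j] of
   the cell in row [k]. *)
Definition cell_x : seq Z := [:: 956; 57; 835; 670; 606]%Z.
Definition cell_y : seq Z := [:: 948; 85; 736; 308; 607]%Z.
Definition cell_edges : seq (seq (nat * nat * nat)) :=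
  [:: [:: (1, 1, 1); (2, 0, 0); (1, 0, 1); (2, 1, 1); (4, 1, 2)];
      [:: (3, 0, 0)];
      [:: (4, 0, 0); (1, 1, 2)];
      [:: (4, 0, 0); (1, 0, 1); (0, 0, 1)];
      [:: (3, 1, 0); (4, 1, 1)]].

Definition strip_x : nat -> Z := tabulate 0%Z 60 (fun a => nth 0%Z cell_x (a %% 5)).
Definition strip_y : nat -> Z :=
  tabulate 0%Z 60 (fun a => 1000 * Z.of_nat (a %/ 5) + nth 0 cell_y (a %% 5))%Z.
Definition strip_fwd (a : nat) : seq (nat * nat) :=
  [seq (5 * (a %/ 5 + e.1.2) + e.1.1, e.2)
  | e <- nth [::] cell_edges (a %% 5) & a %/ 5 + e.1.2 < 12].

Lemma strip_fwd_wf a b d : a < 60 -> (b, d) \in strip_fwd a ->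
  [/\ b < 60, d <= 2 & (d = 0 -> a < b)].
Proof.
move=> lt_a60 fwd_ab.
have /iota_allP /(_ a lt_a60) /allP /(_ _ fwd_ab) /and3P [-> -> /implyP d0_lt] :
    all (fun a => all (fun p => [&& p.1 < 60, p.2 <= 2 & (p.2 == 0) ==> (a < p.1)])
                      (strip_fwd a)) (iota 0 60) by vm_compute.
by split=> // d0; apply: d0_lt; rewrite d0.
Qed.

Lemma strip_fwd_uniq a : a < 60 -> uniq (strip_fwd a).
Proof. by apply: (@iota_allP (fun a => uniq (strip_fwd a))); vm_compute. Qed.

Lemma strip_x_range a : a < 60 -> (0 <= strip_x a < 1000)%Z.
Proof.
move=> lt_a60; rewrite /strip_x tabulateE //.
by case: (a %% 5) => [|[|[|[|[|j]]]]] /=; rewrite ?nth_nil; lia.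
Qed.

Lemma strip_xy_inj a c :
  a < 60 -> c < 60 -> strip_x a = strip_x c -> strip_y a = strip_y c -> a = c.
Proof.
move=> lt_a60 lt_c60 eq_x eq_y; apply/eqP.
have /iota_allP /(_ a lt_a60) /iota_allP /(_ c lt_c60) : all (fun a => all (fun c =>
    (a == c) || ((strip_x a, strip_y a) != (strip_x c, strip_y c))) (iota 0 60)) (iota 0 60).
  by vm_compute.
by rewrite eq_x eq_y eqxx orbF.
Qed.

Lemma strip_triangle_free : triangle_free_cert 60 strip_fwd.
Proof. by vm_compute. Qed.

Lemma strip_quadrangle_free : quadrangle_free_cert 60 strip_fwd.
Proof. by vm_compute. Qed.

Lemma strip_edges_avoid_vertices : edges_avoid_vertices_cert 60 strip_fwd strip_x strip_y.
Proof. by vm_compute. Qed.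

Lemma strip_crossing_bound : crossing_cert 60 strip_fwd strip_x strip_y.
Proof. by vm_compute. Qed.

Lemma strip_edges_per_period : \sum_(0 <= a < 60) size (strip_fwd a) = 150.
Proof. by rewrite unlock; vm_compute. Qed.

Lemma strip_has_5cycle n : 130 <= n -> has_cycle_of_length (strip_graph 60 strip_fwd n) 5.
Proof.
move=> n_ge130; apply: (@has_cycle_of_length_lift n _ [:: 0; 66; 68; 64; 129]) => //=.
by rewrite !(leq_trans _ n_ge130).
Qed.

Local Open Scope R_scope.

Theorem theorem22 :
  exists C : R, exists N : nat, forall n : nat, (N <= n)%N ->
    exists e : rel 'I_n,
      [/\ simple_graph e, k_planar 3 e, girth_eq e 5 &
          INR (num_edges e) >= 5 / 2 * INR n - C].
Proof.
have P_gt0 : (0 < 60)%N by [].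
exists 450, 130%N => n n_ge130; exists (strip_graph 60 strip_fwd n); split.
- exact: (strip_graph_simple P_gt0 strip_fwd_wf n).
- exact: (strip_graph_3planar P_gt0 strip_fwd_wf strip_triangle_free strip_quadrangle_free
    strip_x_range strip_xy_inj strip_edges_avoid_vertices strip_crossing_bound n).
- split; first exact: strip_has_5cycle.
  by move=> k; apply: (strip_graph_no_short_cycle P_gt0 strip_triangle_free strip_quadrangle_free).
- have := num_edges_strip P_gt0 strip_fwd_wf strip_fwd_uniq n.
  rewrite strip_edges_per_period => edges_ge.
  have : (5 * Z.of_nat n <= 2 * Z.of_nat (num_edges (strip_graph 60 strip_fwd n)) + 900)%Z.
    by move: edges_ge (divn_eq n 60) (ltn_pmod n P_gt0); lia.
  move=> /IZR_le; rewrite plus_IZR !mult_IZR -!INR_IZR_INZ; lra.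
Qed.
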